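(* Let $(T,\preceq,\Sigma,\mathcal S,\mathcal M)$ be an $(\mathcal S,\mathcal M)$-tree, $n\in\omega$, $f\in\mathcal{AM}$ with domain $T(\le n)$, and $m\in\omega$ such that either $n=0$ and $0\le m\le\tilde f(0)$, or $n>0$ and $\tilde f(n-1)<m\le\tilde f(n)$. Define $f|_m\colon T(\le n)\to T$ by $f|_m(a)=f(a)|_m$ for $a\in T(n)$ and $f|_m(a)=f(a)$ for $a\in T(<n)$. Then $f|_m\in\mathcal{AM}$, and there exists $g\in\mathcal{AM}^m_1$ such that $g\circ f|_m=f$.
   Context: A tree is a partially ordered set $(T,\preceq)$ such that for every $a\in T$ the set $\{b\in T:b\prec a\}$ is finite and linearly ordered by $\preceq$. The level of $a$ is $\ell(a)=|\{b\in T:b\prec a\}|$; $T(n)=\{a\in T:\ell(a)=n\}$, and $T(\le n)$, $T(<n)$ are defined analogously. For $a\in T$ and $n\le \ell(a)$, $a|_n$ denotes the unique predecessor of $a$ at level $n$ (with $a|_{\ell(a)}=a$). A node $b$ is an immediate successor of $a$ if $a\prec b$ and there is no $c$ with $a\prec c\prec b$. An $\mathcal S$-tree is a quadruple $(T,\preceq,\Sigma,\mathcal S)$ where $(T,\preceq)$ is a countable tree in which every node has finitely many immediate successors and $T(0)$ is finite, $\Sigma$ is a set, and $\mathcal S\colon T\times T^{<\omega}\times\Sigma\to T$ is a partial function such that: (S1) if $\mathcal S(a,\bar p,c)$ is defined then it is an immediate successor of $a$ and every entry of $\bar p$ has level at most $\ell(a)-1$; (S2) if $\mathcal S(a,\bar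 p,c)=\mathcal S(b,\bar q,d)$ then $a=b$, $\bar p=\bar q$ and $c=d$; (S3) for every $a\in T$ and every immediate successor $b$ of $a$ there are $\bar p\in T^{<\omega}$ and $c\in\Sigma$ with $b=\mathcal S(a,\bar p,c)$. For $S\subseteq T$, a map $f\colon S\to T$ is level-preserving if $\ell(a)=\ell(b)$ implies $\ell(f(a))=\ell(f(b))$; then $\tilde f(n)$ denotes $\ell(f(a))$ for any $a\in S$ with $\ell(a)=n$. An injection $F\colon T\to T$ is shape-preserving if (i) it is level-preserving; (ii) whenever $\mathcal S(a,\bar p,c)$ is defined, $\mathcal S(F(a),F(\bar p),c)$ is defined and $\mathcal S(F(a),F(\bar p),c)\preceq F(\mathcal S(a,\bar p,c))$, where $F(\bar p)$ is the tuple of images of the entries of $\bar p$; (iii) for every $a\in T(0)$ and $b\in T$ with $a\preceq b$ we have $a\preceq F(b)$. A shape-preserving $F$ skips level $m$ if $m\notin\tilde F[\omega]$, and skips only level $m$ if $\tilde F[\omega]=\omega\setminus\{m\}$. An $(\mathcal S,\mathcal M)$-tree is a quintuple $(T,\preceq,\Sigma,\mathcal S,\mathcal M)$ where $(T,\preceq,\Sigma,\mathcal S)$ is an $\mathcal S$-tree and $\mathcal M$ is a set of shape-preserving functions $T\to T$ such that: (M1) $\mathrm{Id}_T\in\mathcal M$, $\mathcal M$ is closed under composition, and whenever $(F_i)_{i\in\omega}$ is a sequence in $\mathcal M$ with $F_i\restriction T(\le i)=F_{i+1}\restriction T(\le i)$ for all $i$, there is $F_\infty\in\mathcal M$ with $F_\infty\restriction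 T(\le i)=F_i\restriction T(\le i)$ for all $i$; (M2) for every $n\in\omega$ and every $F\in\mathcal M$ with $\tilde F(n)>0$ which skips level $\tilde F(n)-1$, there are $F_1,F_2\in\mathcal M$ such that $F_2$ skips only level $\tilde F(n)-1$ and $(F_2\circ F_1)\restriction T(\le n)=F\restriction T(\le n)$; (M3) for all $n<m$ in $\omega$ there is $F^n_m\in\mathcal M$ skipping only level $m$ such that $F^n_m(b)=\mathcal S(b,\bar p,c)$ whenever $a\in T(n)$, $b\in T(m)$, $\bar p\in T^{<\omega}$, $c\in\Sigma$, $\mathcal S(a,\bar p,c)$ is defined and $\mathcal S(a,\bar p,c)\preceq b$. Notation: $\mathcal M^n=\{F\in\mathcal M: F\restriction T(<n)\text{ is the identity}\}$; $\mathcal{AM}=\{F\restriction T(<k): F\in\mathcal M,\ k>0\}$; $\mathcal{AM}^n_k=\{F\restriction T(<n+k):F\in\mathcal M^n\}$ (so elements of $\mathcal{AM}^m_1$ have domain $T(\le m)$ and are the identity on $T(<m)$). *)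

From Stdlib Require Import List Arith Lia ClassicalEpsilon.
Import ListNotations.
Set Implicit Arguments.

Section Trees.
Variable T : Type.
Variable le : T -> T -> Prop.

Definition lt (a b : T) : Prop := le a b /\ a <> b.

Definition is_level (a : T) (k : nat) : Prop :=
  exists l : list T, NoDup l /\ (forall b, lt b a <-> In b l) /\ length l = k.

Definition lev (a : T) : nat := epsilon (inhabits 0) (is_level a).

Definition restr (a : T) (k : nat) : T :=
  epsilon (inhabits a) (fun b => le b a /\ lev b = k).

Definition imm_succ (a b : T) : Prop :=
  lt a b /\ ~ exists c, lt a c /\ lt c b.

Definition is_tree : Prop :=
  (forall a, le a a) /\
  (forall a b, le a b -> le b a -> a = b) /\
  (forall a b c, le a b -> le b c -> le a c) /\
  (forall a, exists l : list T, forall b, lt b a <-> In b l) /\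
  (forall a b c, lt b a -> lt c a -> le b c \/ le c b).

Definition level_preserving_on (P : T -> Prop) (f : T -> T) : Prop :=
  forall a b, P a -> P b -> lev a = lev b -> lev (f a) = lev (f b).

Definition ftil (f : T -> T) (k : nat) : nat :=
  epsilon (inhabits 0) (fun j => exists a, lev a = k /\ lev (f a) = j).

Definition skips (F : T -> T) (m : nat) : Prop := ~ exists a, lev (F a) = m.
Definition skips_only (F : T -> T) (m : nat) : Prop :=
  forall j, (exists a, lev (F a) = j) <-> j <> m.

Variable Sigma : Type.
Variable S : T -> list T -> Sigma -> option T.

Definition S_tree : Prop :=
  is_tree /\
  (exists code : T -> nat, forall a b, code a = code b -> a = b) /\
  (forall a, exists l : list T, forall b, imm_succ a b <-> In b l) /\
  (exists l : list T, forall a, lev a = 0 <-> In a l) /\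
  (forall a p c b, S a p c = Some b ->
     imm_succ a b /\ (forall x, In x p -> lev x < lev a)) /\
  (forall a p c b q d e, S a p c = Some e -> S b q d = Some e ->
     a = b /\ p = q /\ c = d) /\
  (forall a b, imm_succ a b -> exists p c, S a p c = Some b).

Definition shape_preserving (F : T -> T) : Prop :=
  (forall a b, F a = F b -> a = b) /\
  level_preserving_on (fun _ => True) F /\
  (forall a p c b, S a p c = Some b ->
     exists b', S (F a) (map F p) c = Some b' /\ le b' (F b)) /\
  (forall a b, lev a = 0 -> le a b -> le a (F b)).

Variable M : (T -> T) -> Prop.

Definition SM_tree : Prop :=
  S_tree /\
  (forall F, M F -> shape_preserving F) /\
  M (fun a => a) /\
  (forall F G, M F -> M G -> M (fun a => F (G a))) /\
  (forall Fs : nat -> T -> T, (forall i, M (Fs i)) ->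
     (forall i a, lev a <= i -> Fs i a = Fs (Datatypes.S i) a) ->
     exists Finf, M Finf /\ forall i a, lev a <= i -> Finf a = Fs i a) /\
  (forall n F, M F -> 0 < ftil F n -> skips F (ftil F n - 1) ->
     exists F1 F2, M F1 /\ M F2 /\ skips_only F2 (ftil F n - 1) /\
       forall a, lev a <= n -> F2 (F1 a) = F a) /\
  (forall n m, n < m -> exists F, M F /\ skips_only F m /\
     forall a b p c s, lev a = n -> lev b = m -> S a p c = Some s -> le s b ->
       S b p c = Some (F b)).

Definition inAM (f : T -> T) (k : nat) : Prop :=
  0 < k /\ exists F, M F /\ forall a, lev a < k -> f a = F a.

Definition inAMnk (f : T -> T) (n k : nat) : Prop :=
  exists F, M F /\ (forall a, lev a < n -> F a = a) /\
    forall a, lev a < n + k -> f a = F a.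

Definition fcut (f : T -> T) (n m : nat) (a : T) : T :=
  if Nat.eqb (lev a) n then restr (f a) m else f a.

End Trees.

(* Extend f to some F in M.  Below level n the map F lands below level m, and on
   level n it lands on level m + d.  Applying (M2) d times peels off one skipped
   level at a time, factoring F = G o F1 on T(<= n) with F1 in M sending level n
   to level m and G in M the identity on T(< m).  Such a G moves every node of
   level m to one of its extensions, so F a |_m = F1 a for a in T(n): f|_m is F1
   on T(<= n), and g := G is the required element of AM^m_1. *)
From Stdlib Require Import List Arith Lia Classical ClassicalEpsilon.
Import ListNotations.
Set Implicit Arguments.
Unset Strict Implicit.

Lemma exists_NoDup_same_elements (A : Type) (l : list A) :
  exists l', NoDup l' /\ forall x, In x l <-> In x l'.
Proof.
  induction l as [|a r [l' [Hnd Hin]]].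
  - exists []; split; [constructor | tauto].
  - destruct (classic (In a l')) as [Ha|Ha].
    + exists l'; split; auto. intro x; simpl; rewrite Hin.
      split; [intros [->|?]|]; auto.
    + exists (a :: l'); split; [constructor; auto|].
      intro x; simpl; rewrite Hin; tauto.
Qed.

Lemma ftil_of_level (T : Type) (le : T -> T -> Prop) (f : T -> T) k x :
  (forall a b, lev le a = k -> lev le b = k -> lev le (f a) = lev le (f b)) ->
  lev le x = k -> ftil le f k = lev le (f x).
Proof.
  intros Hf Hx. unfold ftil.
  destruct (@epsilon_spec nat (inhabits 0)
     (fun j => exists a, lev le a = k /\ lev le (f a) = j)
     (ex_intro _ _ (ex_intro _ x (conj Hx eq_refl)))) as (a & Ha & <-).
  auto.
Qed.

Section Tree.

Variables (T : Type) (le : T -> T -> Prop).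
Hypothesis Ht : is_tree le.

Lemma lev_spec a : is_level le a (lev le a).
Proof.
  unfold lev. apply epsilon_spec.
  destruct Ht as (_ & _ & _ & Hfin & _). destruct (Hfin a) as [l Hl].
  destruct (exists_NoDup_same_elements l) as [l' [Hnd Hin]].
  exists (length l'), l'. split; auto. split; auto. intro y; rewrite Hl; auto.
Qed.

Lemma lt_trans a b c : lt le a b -> lt le b c -> lt le a c.
Proof.
  destruct Ht as (_ & Hanti & Htr & _). intros [Hab Nab] [Hbc Nbc].
  split; eauto. intros ->. apply Nab, Hanti; auto.
Qed.

Lemma lev_lt a b : lt le a b -> lev le a < lev le b.
Proof.
  intro Hab.
  destruct (lev_spec a) as (la & Hnda & Hia & <-).
  destruct (lev_spec b) as (lb & Hndb & Hib & <-).
  assert (Hnd : NoDup (a :: la)).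
  { constructor; auto. rewrite <- Hia. intros [_ N]; auto. }
  apply (NoDup_incl_length Hnd). intros x [<-|Hx]; apply Hib; auto.
  apply Hia in Hx. eapply lt_trans; eauto.
Qed.

Lemma le_lev_eq a b : le a b -> lev le a = lev le b -> a = b.
Proof.
  intros Hab E. destruct (classic (a = b)) as [|N]; auto.
  pose proof (lev_lt (conj Hab N)). lia.
Qed.

Lemma le_total_below u v x : le u x -> le v x -> le u v \/ le v u.
Proof.
  intros Hu Hv. destruct (classic (u = x)) as [->|Nu]; auto.
  destruct (classic (v = x)) as [->|Nv]; auto.
  destruct Ht as (_ & _ & _ & _ & Hlin). apply (Hlin x); split; auto.
Qed.

Lemma lt_list_has_max x (l : list T) :
  (forall b, In b l -> lt le b x) -> l <> [] ->
  exists y, In y l /\ forall b, In b l -> le b y.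
Proof.
  destruct Ht as (Hrefl & _ & Htr & _ & Hlin).
  induction l as [|a [|c r] IH]; intros Hl Hne; [congruence| |].
  - exists a. split; [left; auto|]. intros b [<-|[]]; auto.
  - destruct IH as (y & Hy & Hmax); [intros; apply Hl; right; auto | congruence |].
    destruct (Hlin x a y (Hl a (or_introl eq_refl)) (Hl y (or_intror Hy))).
    + exists y; split; [right; auto|]. intros b [<-|Hb]; auto.
    + exists a; split; [left; auto|]. intros b [<-|Hb]; eauto.
Qed.

Lemma imm_pred_exists x k :
  lev le x = S k -> exists y, imm_succ le y x /\ lev le y = k.
Proof.
  intro Hx.
  destruct (lev_spec x) as (lx & Hndx & Hix & Hlx).
  destruct (@lt_list_has_max x lx) as (y & Hy & Hmax).
  { intros b; apply Hix. }
  { intros ->; simpl in Hlx; lia. }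
  assert (Hyx : lt le y x) by (apply Hix; auto).
  exists y. split.
  - split; auto. intros (c & [Hyc Nyc] & Hcx).
    apply Nyc. destruct Ht as (_ & Hanti & _). apply Hanti; auto.
    apply Hmax, Hix; auto.
  - pose proof (lev_lt Hyx).
    destruct (lev_spec y) as (ly & Hndy & Hiy & Hly).
    assert (length lx <= length (y :: ly)).
    { apply NoDup_incl_length; auto. intros b Hb.
      destruct (classic (b = y)) as [->|N]; [left; auto | right].
      apply Hiy. split; auto. }
    simpl in *. lia.
Qed.

Lemma pred_at_level x j : j <= lev le x -> exists y, le y x /\ lev le y = j.
Proof.
  remember (lev le x - j) as d eqn:Ed. revert x Ed.
  induction d as [|d IH]; intros x Ed Hj.
  - exists x; split; [destruct Ht; auto | lia].
  - destruct (@imm_pred_exists x (lev le x - 1)) as (y & [[Hyx _] _] & Hy); [lia|].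
    destruct (IH y) as (z & Hzy & Hz); try lia.
    exists z; split; auto. destruct Ht as (_ & _ & Htr & _); eauto.
Qed.

Lemma restr_le b x k : le b x -> lev le b = k -> restr le x k = b.
Proof.
  intros Hbx Hb. unfold restr.
  destruct (@epsilon_spec T (inhabits x) (fun b => le b x /\ lev le b = k)
     (ex_intro _ b (conj Hbx Hb))) as [Hr Hrk].
  destruct (le_total_below Hr Hbx); [|symmetry]; apply le_lev_eq; auto; lia.
Qed.

Section ShapePreserving.

Variables (Sigma : Type) (S : T -> list T -> Sigma -> option T).
Hypothesis HS : S_tree le S.
Variable F : T -> T.
Hypothesis HF : shape_preserving le S F.

Lemma imm_succ_image_lt z y : imm_succ le z y -> lt le (F z) (F y).
Proof.
  destruct HS as (_ & _ & _ & _ & HS1 & _ & HS3).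
  destruct HF as (_ & _ & Hsucc & _).
  destruct Ht as (_ & _ & Htr & _).
  intro Hzy. destruct (HS3 _ _ Hzy) as (p & c & Hp).
  destruct (Hsucc _ _ _ _ Hp) as (b & Hb & HbF).
  destruct (HS1 _ _ _ _ Hb) as [[[Hzb Nzb] _] _].
  split; eauto. intro E. rewrite <- E in HbF. apply Nzb.
  destruct Ht as (_ & Hanti & _). auto.
Qed.

Lemma lev_image_gap x y :
  le x y -> lev le (F x) + (lev le y - lev le x) <= lev le (F y).
Proof.
  remember (lev le y - lev le x) as d eqn:Ed. revert y Ed.
  induction d as [|d IH]; intros y Ed Hxy.
  - destruct (classic (x = y)) as [->|N]; [lia|].
    pose proof (lev_lt (conj Hxy N)). lia.
  - destruct (@imm_pred_exists y (lev le y - 1)) as (z & Hzy & Hz); [lia|].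
    assert (Hxz : le x z).
    { destruct Hzy as [[Hzy _] _].
      destruct (le_total_below Hxy Hzy) as [|Hzx]; auto.
      destruct (classic (z = x)) as [->|N]; [destruct Ht; auto|].
      pose proof (lev_lt (conj Hzx N)). lia. }
    specialize (IH z ltac:(lia) Hxz).
    pose proof (lev_lt (imm_succ_image_lt Hzy)). lia.
Qed.

Lemma lev_le_image x : lev le x <= lev le (F x).
Proof.
  destruct (@pred_at_level x 0) as (r & Hrx & Hr); [lia|].
  pose proof (lev_image_gap Hrx). lia.
Qed.

Lemma lev_image_monotone a b :
  lev le a <= lev le b -> lev le (F a) <= lev le (F b).
Proof.
  intro Hab. destruct (pred_at_level Hab) as (u & Hub & Hu).
  destruct HF as (_ & Hlp & _).
  rewrite (Hlp a u) by auto.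
  pose proof (lev_image_gap Hub). lia.
Qed.

Lemma le_image_of_id_below l :
  (forall y, lev le y < l -> F y = y) -> forall x, lev le x = l -> le x (F x).
Proof.
  intros Hid x Hx.
  destruct HS as (_ & _ & _ & _ & HS1 & _ & HS3).
  destruct HF as (_ & _ & Hsucc & Hroot).
  destruct l as [|k].
  - apply Hroot; auto. destruct Ht; auto.
  - destruct (imm_pred_exists Hx) as (y & Hyx & Hy).
    destruct (HS3 _ _ Hyx) as (p & c & Hp).
    destruct (HS1 _ _ _ _ Hp) as [_ Hpl].
    destruct (Hsucc _ _ _ _ Hp) as (b & Hb & HbF).
    rewrite Hid in Hb by lia.
    rewrite (map_ext_in F (fun a => a)), map_id in Hb by
      (intros a Ha; apply Hid; specialize (Hpl a Ha); lia).
    congruence.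
Qed.

Lemma skips_only_id_below j : skips_only le F j ->
  forall x, lev le x < j -> F x = x.
Proof.
  intros Hsk.
  enough (Hl : forall l x, lev le x = l -> l < j -> F x = x) by eauto.
  induction l as [l IH] using lt_wf_ind. intros x Hx Hlj.
  assert (Hbelow : forall y, lev le y < l -> F y = y)
    by (intros y Hy; apply (IH (lev le y)); auto; lia).
  destruct (proj2 (Hsk l) ltac:(lia)) as (a & Ha).
  assert (Hal : lev le a = l).
  { pose proof (lev_le_image a).
    destruct (lt_dec (lev le a) l) as [Hlt|]; [|lia].
    rewrite (Hbelow a Hlt) in Ha. lia. }
  destruct HF as (_ & Hlp & _).
  assert (lev le (F x) = l) by (rewrite <- Ha; apply Hlp; auto; congruence).
  symmetry. apply le_lev_eq; [|lia]. apply (le_image_of_id_below Hbelow); auto.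
Qed.

Lemma skips_only_lev_up j : skips_only le F j ->
  forall z, j <= lev le z -> lev le z < lev le (F z).
Proof.
  intros Hsk z Hz. destruct (pred_at_level Hz) as (u & Huz & Hu).
  pose proof (lev_le_image u).
  assert (lev le (F u) <> j) by (intro E; apply (proj1 (Hsk j)); eauto).
  pose proof (lev_image_gap Huz). lia.
Qed.

End ShapePreserving.

Section SMTree.

Variables (Sigma : Type) (S : T -> list T -> Sigma -> option T).
Variable M : (T -> T) -> Prop.
Hypothesis HSM : SM_tree le S M.
Let HS : S_tree le S := proj1 HSM.

Lemma M_shape_preserving F : M F -> shape_preserving le S F.
Proof. pose proof HSM as (_ & Hsp & _). auto. Qed.

Lemma M_lower_level_once F n m d w : M F -> lev le w = n ->
  (forall a, lev le a < n -> lev le (F a) < m) ->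
  (forall a, lev le a = n -> lev le (F a) = m + d + 1) ->
  exists F1 F2, M F1 /\ M F2 /\ skips_only le F2 (m + d) /\
    (forall a, lev le a <= n -> F2 (F1 a) = F a) /\
    (forall a, lev le a < n -> F1 a = F a) /\
    (forall a, lev le a = n -> lev le (F1 a) = m + d).
Proof.
  intros HF Hw Hlo Hn.
  pose proof HSM as (_ & _ & _ & _ & _ & HM2 & _).
  pose proof (M_shape_preserving HF) as HsF.
  assert (Hft : ftil le F n = m + d + 1).
  { rewrite (ftil_of_level (x := w)); auto. intros a b Ha Hb.
    destruct HsF as (_ & Hlp & _). apply Hlp; auto; congruence. }
  destruct (HM2 n F HF) as (F1 & F2 & HF1 & HF2 & Hsk & Hcomp); rewrite ?Hft; [lia| |].
  { intros (a & Ha).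
    destruct (le_gt_dec n (lev le a)) as [Hna|Han].
    - pose proof (lev_image_monotone HS HsF (a := w) (b := a) ltac:(lia)).
      specialize (Hn w Hw). lia.
    - specialize (Hlo a Han). lia. }
  rewrite Hft, Nat.add_sub in Hsk.
  pose proof (M_shape_preserving HF2) as HsF2.
  assert (Hlow : forall a, lev le a < n -> F1 a = F a).
  { intros a Ha. specialize (Hlo a Ha).
    pose proof (lev_le_image HS HsF2 (F1 a)) as Hup. rewrite Hcomp in Hup by lia.
    rewrite <- (Hcomp a) by lia.
    symmetry; apply (skips_only_id_below HS HsF2 Hsk). lia. }
  exists F1, F2. do 5 (split; [auto|]).
  intros a Ha. pose proof (Hcomp a ltac:(lia)) as Hca. specialize (Hn a Ha).
  destruct (lt_dec (lev le (F1 a)) (m + d)) as [Hl|Hl].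
  - rewrite (skips_only_id_below HS HsF2 Hsk) in Hca by lia.
    rewrite Hca in Hl. lia.
  - pose proof (skips_only_lev_up HS HsF2 Hsk (z := F1 a) ltac:(lia)).
    rewrite Hca in H. lia.
Qed.

Lemma M_factor_through_level n m w d : lev le w = n -> forall F, M F ->
  (forall a, lev le a < n -> lev le (F a) < m) ->
  (forall a, lev le a = n -> lev le (F a) = m + d) ->
  exists F1 G, M F1 /\ M G /\ (forall y, lev le y < m -> G y = y) /\
    (forall a, lev le a <= n -> G (F1 a) = F a) /\
    (forall a, lev le a < n -> F1 a = F a) /\
    (forall a, lev le a = n -> lev le (F1 a) = m).
Proof.
  pose proof HSM as (_ & _ & Hid & HMcomp & _).
  intro Hw. induction d as [|d IH]; intros F HF Hlo Hn.
  - exists F, (fun a => a). repeat split; auto.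
    intros a Ha. rewrite Hn; auto.
  - assert (Hn' : forall a, lev le a = n -> lev le (F a) = m + d + 1)
      by (intros a Ha; rewrite Hn; auto; lia).
    destruct (M_lower_level_once HF Hw Hlo Hn')
      as (F1' & F2 & HF1' & HF2 & Hsk & Hcomp & Hlow & Hlev).
    destruct (IH F1' HF1') as (F1 & G & HF1 & HG & HGid & HGcomp & HF1low & HF1lev);
      [intros a Ha; rewrite Hlow; auto | auto |].
    pose proof (skips_only_id_below HS (M_shape_preserving HF2) Hsk) as HF2id.
    exists F1, (fun y => F2 (G y)). repeat split; auto.
    + intros y Hy. rewrite HGid, HF2id; auto; lia.
    + intros a Ha. rewrite HGcomp; auto.
    + intros a Ha. rewrite HF1low, Hlow; auto.
Qed.

Lemma fcut_factor n m (f F1 G : T -> T) : M F1 -> M G ->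
  (forall y, lev le y < m -> G y = y) ->
  (forall a, lev le a <= n -> G (F1 a) = f a) ->
  (forall a, lev le a < n -> F1 a = f a) ->
  (forall a, lev le a = n -> lev le (F1 a) = m) ->
  inAM le M (fcut le f n m) (n + 1) /\
  exists g, inAMnk le M g m 1 /\
    forall a, lev le a <= n -> g (fcut le f n m a) = f a.
Proof.
  intros HF1 HG HGid HGcomp Hlow Hlev.
  assert (Hcut : forall a, lev le a <= n -> fcut le f n m a = F1 a).
  { intros a Ha. unfold fcut.
    destruct (Nat.eqb_spec (lev le a) n) as [E|E]; [|symmetry; apply Hlow; lia].
    rewrite <- (HGcomp a) by lia.
    apply restr_le; auto.
    apply (le_image_of_id_below HS (M_shape_preserving HG) HGid); auto. }
  split; [split; [lia | exists F1; split; auto] | exists G; split].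
  - intros a Ha. apply Hcut; lia.
  - exists G. repeat split; auto.
  - intros a Ha. rewrite Hcut; auto.
Qed.

End SMTree.

End Tree.

Theorem mainTheorem7 (T : Type) (le : T -> T -> Prop) (Sigma : Type)
  (S : T -> list T -> Sigma -> option T) (M : (T -> T) -> Prop)
  (HSM : SM_tree le S M)
  (n : nat) (f : T -> T) (hf : inAM le M f (n + 1)) (m : nat)
  (hm : (n = 0 /\ m <= ftil le f 0) \/
        (0 < n /\ ftil le f (n - 1) < m /\ m <= ftil le f n)) :
  inAM le M (fcut le f n m) (n + 1) /\
  exists g : T -> T, inAMnk le M g m 1 /\
    forall a, lev le a <= n -> g (fcut le f n m a) = f a.
Proof.
  pose proof HSM as (HS & _ & Hid & _). pose proof HS as (Ht & _).
  destruct hf as (_ & F & HF & HfF).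
  assert (HfF' : forall a, lev le a <= n -> F a = f a)
    by (intros a Ha; symmetry; apply HfF; lia).
  pose proof (M_shape_preserving HSM HF) as HsF. pose proof HsF as (_ & Hlp & _).
  destruct (classic (exists w, lev le w = n)) as [(w & Hw)|Nw].
  2: { apply (fcut_factor Ht HSM (F1 := F) (G := fun a => a)); auto.
       - intros a Ha. apply HfF'. lia.
       - intros a Ha. exfalso; eauto. }
  assert (Hfl : forall x, lev le x <= n -> ftil le f (lev le x) = lev le (F x)).
  { intros x Hx. rewrite (ftil_of_level (x := x)), HfF'; auto.
    intros a b Ha Hb. rewrite <- !HfF' by lia. apply Hlp; auto; congruence. }
  assert (Hlo : forall a, lev le a < n -> lev le (F a) < m).
  { intros a Ha. destruct hm as [[-> _] | (Hn & Hm & _)]; [lia|].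
    destruct (pred_at_level Ht (x := w) (j := n - 1)) as (w1 & _ & Hw1); [lia|].
    rewrite <- Hw1, Hfl in Hm by lia.
    pose proof (lev_image_monotone Ht HS HsF (a := a) (b := w1) ltac:(lia)). lia. }
  assert (Hn : forall a, lev le a = n -> lev le (F a) = m + (lev le (F w) - m)).
  { assert (m <= lev le (F w))
      by (rewrite <- Hfl, Hw by lia; destruct hm as [[<- ?] | (_ & _ & ?)]; auto).
    intros a Ha. rewrite (Hlp a w); auto; congruence || lia. }
  destruct (M_factor_through_level Ht HSM Hw HF Hlo Hn)
    as (F1 & G & HF1 & HG & HGid & HGcomp & HF1low & HF1lev).
  apply (fcut_factor Ht HSM HF1 HG HGid); auto.
  - intros a Ha. rewrite HGcomp; auto.
  - intros a Ha. rewrite HF1low by auto. apply HfF'; lia.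
Qed.
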